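(* Let $k\geq 2$ be an integer, let $\mathcal{F}$ be a linear $k$-uniform family with maximum degree $\Delta=\Delta(\mathcal{F})$ and maximum matching size $\nu=\nu(\mathcal{F})$, and let $\mathcal{M}$ be a maximum matching of $\mathcal{F}$. Then $|D_1(\mathcal{F},\mathcal{M})|\leq\max\{(\Delta-1)\nu,\;k(k-1)\nu\}$.
   Context: A family is a finite collection of distinct subsets of a vertex set; it is $k$-uniform if every member has exactly $k$ elements and linear if any two distinct members share at most one vertex. A matching is a collection of pairwise disjoint members; $\nu(\mathcal{F})$ is the maximum size of a matching, and a maximum matching is one of that size. $\Delta(\mathcal{F})=\max_x|\{A\in\mathcal{F}:x\in A\}|$. $X_{\mathcal{M}}=\bigcup_{A\in\mathcal{M}}A$ and $D_1(\mathcal{F},\mathcal{M})=\{A\in\mathcal{F}:|A\cap X_{\mathcal{M}}|=1\}$. *)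

From mathcomp Require Import all_boot.
Set Implicit Arguments. Unset Strict Implicit. Unset Printing Implicit Defensive.

Section Families.
Variable T : finType.
Implicit Types (F M : {set {set T}}) (A B : {set T}) (x : T).

Definition uniform (k : nat) F := forall A, A \in F -> #|A| = k.

Definition linear F := forall A B, A \in F -> B \in F -> A != B -> #|A :&: B| <= 1.

Definition is_matching F M :=
  M \subset F /\ forall A B, A \in M -> B \in M -> A != B -> [disjoint A & B].

Definition nu F : nat :=
  \max_(M in powerset F | [forall A in M, forall B in M, (A != B) ==> [disjoint A & B]]) #|M|.

Definition is_max_matching F M := is_matching F M /\ #|M| = nu F.

Definition degree F x : nat := #|[set A in F | x \in A]|.
Definition Delta F : nat := \max_(x : T) degree F x.

Definition XM M : {set T} := \bigcup_(A in M) A.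

Definition D1 F M : {set {set T}} := [set A in F | #|A :&: XM M| == 1].
End Families.

From mathcomp Require Import all_boot.
Set Implicit Arguments. Unset Strict Implicit. Unset Printing Implicit Defensive.

(* Each member of D1 meets X_M in a single vertex v, which lies in a unique
   member B of M.  If two distinct vertices v1, v2 of B lie in members A1, A2
   of D1, then A1 and A2 meet: otherwise replacing B by A1 and A2 would enlarge
   the maximum matching.  So every member of D1 through a vertex v of B meets a
   fixed A1 through another vertex w of B, in a vertex of A1 other than w; by
   linearity distinct members through v do so at distinct vertices, so at most
   k - 1 members pass through v and at most k(k - 1) through B.  If only one
   vertex v of B is hit, these members and B itself all contain v, so there are
   at most Delta - 1 of them.  Summing over the nu members of M gives the
   bound. *)

Lemma leq_card_bigcup (T I : finType) (P : pred I) (S : I -> {set T}) :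
  #|\bigcup_(i | P i) S i| <= \sum_(i | P i) #|S i|.
Proof.
apply: (big_rec2 (fun (U : {set T}) n => #|U| <= n)); first by rewrite cards0.
by move=> i n U _ le_Un; apply: leq_trans (leq_card_setU _ _) _; rewrite leq_add2l.
Qed.

Section Matchings.
Variables (T : finType) (F : {set {set T}}).

Lemma linear_common_vertex A B x y : linear F -> A \in F -> B \in F -> A != B ->
  x \in A -> x \in B -> y \in A -> y \in B -> x = y.
Proof.
move=> linF AF BF nAB xA xB yA yB; apply/eqP; apply: contraLR (linF _ _ AF BF nAB).
rewrite -ltnNge => nxy; apply: (@leq_trans #|[set x; y]|); first by rewrite cards2 nxy.
apply: subset_leq_card.
by apply/subsetP => z; rewrite !inE => /orP[]/eqP->; rewrite ?xA ?xB ?yA ?yB.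
Qed.

Lemma matching_leq_nu M : is_matching F M -> #|M| <= nu F.
Proof.
move=> [sMF dM]; rewrite /nu.
apply: (leq_bigmax_cond (P := fun M0 => (M0 \in powerset F) &&
  [forall A in M0, forall B in M0, (A != B) ==> [disjoint A & B]])
  (F := fun M0 => #|M0|)).
rewrite powersetE sMF; apply/forallP => A; apply/implyP => AM.
by apply/forallP => B; apply/implyP => BM; apply/implyP; apply: dM.
Qed.

Lemma max_matching_exchange M B A1 A2 :
  is_max_matching F M -> B \in M -> A1 \in F -> A2 \in F ->
  A1 \notin M -> A2 \notin M -> A1 != A2 -> [disjoint A1 & A2] ->
  {in M :\ B, forall C : {set T}, [disjoint A1 & C] && [disjoint A2 & C]} -> False.
Proof.
move=> [[sMF dM] cardM] BM A1F A2F A1M A2M nA12 dA12 dAC.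
set M' := A1 |: (A2 |: (M :\ B)).
have cardM' : #|M'| = #|M|.+1.
  rewrite !cardsU1 !in_setU1 !in_setD1 (negbTE nA12) (negbTE A1M) (negbTE A2M).
  by rewrite !andbF (cardsD1 B M) BM.
suff : #|M|.+1 <= nu F by rewrite cardM ltnn.
rewrite -cardM'; apply: matching_leq_nu; split.
  apply/subsetP => X /setU1P[-> // | /setU1P[-> // | /setD1P[_]]].
  exact: (subsetP sMF).
move=> X Y /setU1P[-> | /setU1P[-> | XM]] /setU1P[-> | /setU1P[-> | YM]];
  rewrite ?eqxx // => nXY; try by [rewrite disjoint_sym | case/andP: (dAC _ YM)
                                   | rewrite disjoint_sym; case/andP: (dAC _ XM)].
by case/setD1P: XM => _ XM; case/setD1P: YM => _ YM; apply: dM.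
Qed.

End Matchings.

Lemma mem_XM (T : finType) (M : {set {set T}}) B v :
  B \in M -> v \in B -> v \in XM M.
Proof. by move=> BM; apply/subsetP/bigcup_sup. Qed.

Section D1Bound.
Variables (T : finType) (k : nat) (F M : {set {set T}}).
Hypotheses (k_ge2 : 2 <= k) (unifF : uniform k F) (linF : linear F)
  (maxM : is_max_matching F M).

Let sMF : M \subset F. Proof. by case: maxM => [[]]. Qed.

Definition D1_at v := [set A in D1 F M | v \in A].

Lemma D1_atP v A : v \in XM M -> A \in D1_at v ->
  [/\ A \in F, v \in A & A :&: XM M = [set v]].
Proof.
move=> vX; rewrite !inE => /andP[/andP[AF /cards1P[x AX]] vA]; split=> //.
have : v \in A :&: XM M by rewrite inE vA vX.
by rewrite AX => /set1P ->.
Qed.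

Lemma D1_at_notin v w A : v \in XM M -> w \in XM M -> v != w ->
  A \in D1_at v -> w \notin A.
Proof.
move=> vX wX nvw /(D1_atP vX)[_ _ AX]; apply: contraNN nvw => wA.
have : w \in A :&: XM M by rewrite inE wA wX.
by rewrite AX => /set1P ->.
Qed.

(* The unique vertex of A in X_M would otherwise be all of A, whose size is k >= 2. *)
Lemma D1_at_notin_matching v A : v \in XM M -> A \in D1_at v -> A \notin M.
Proof.
move=> vX /(D1_atP vX)[AF _ AX]; apply: contraTN k_ge2 => AM.
have /setIidPl AsX : A \subset XM M by apply/bigcup_sup.
by rewrite -(unifF AF) -AsX AX cards1.
Qed.

Lemma D1_at_disjoint_matching B C v A : B \in M -> v \in B -> C \in M :\ B ->
  A \in D1_at v -> [disjoint A & C].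
Proof.
move=> BM vB /setD1P[nCB CM] /(D1_atP (mem_XM BM vB))[_ _ AX].
case: maxM => [[_ dM] _]; have /pred0P dCB := dM _ _ CM BM nCB.
apply/pred0P => x /=; apply/negbTE/andP => -[xA xC].
have : x \in A :&: XM M by rewrite inE xA (mem_XM CM xC).
by rewrite AX => /set1P xv; have := dCB x; rewrite /= xC xv vB.
Qed.

Lemma D1_at_meet B v1 v2 A1 A2 : B \in M -> v1 \in B -> v2 \in B -> v1 != v2 ->
  A1 \in D1_at v1 -> A2 \in D1_at v2 -> ~~ [disjoint A1 & A2].
Proof.
move=> BM v1B v2B n12 A1D A2D; apply/negP => dA12.
have v1X := mem_XM BM v1B; have v2X := mem_XM BM v2B.
have [A1F v1A1 _] := D1_atP v1X A1D; have [A2F _ _] := D1_atP v2X A2D.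
have nA12 : A1 != A2.
  by apply: contraTneq v1A1 => ->; rewrite (D1_at_notin v2X v1X _ A2D) // eq_sym.
apply: (max_matching_exchange maxM BM A1F A2F) => //.
- exact: D1_at_notin_matching A1D.
- exact: D1_at_notin_matching A2D.
move=> C CM.
by rewrite (D1_at_disjoint_matching BM v1B CM A1D) (D1_at_disjoint_matching BM v2B CM A2D).
Qed.

Lemma card_D1_at_le_Delta B v : B \in M -> v \in B -> #|D1_at v| <= (Delta F).-1.
Proof.
move=> BM vB; have vX := mem_XM BM vB.
have BD : B \notin D1_at v by apply: contraL BM => /(D1_at_notin_matching vX).
have : #|B |: D1_at v| <= degree F v.
  apply/subset_leq_card/subsetP => A /setU1P[-> | AD]; rewrite inE.
    by rewrite (subsetP sMF) ?vB.
  by case: (D1_atP vX AD) => -> ->.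
rewrite cardsU1 BD add1n => /leq_trans/(_ (leq_bigmax v)).
by rewrite -/(Delta F); case: (Delta F).
Qed.

(* A |-> a vertex of A :&: A1 is injective by linearity, as all such A share v,
   and it misses w. *)
Lemma card_D1_at_le_pred B v w A1 : B \in M -> v \in B -> w \in B -> v != w ->
  A1 \in D1_at w -> #|D1_at v| <= k.-1.
Proof.
move=> BM vB wB nvw A1D; have vX := mem_XM BM vB; have wX := mem_XM BM wB.
have [A1F wA1 _] := D1_atP wX A1D.
pose meet A := odflt v [pick x in A :&: A1].
have meetP A : A \in D1_at v -> meet A \in A :&: A1.
  rewrite /meet => AD; case: pickP => [//| none].
  have /set0Pn[x xAA1] : A :&: A1 != set0.
    by rewrite setI_eq0 (D1_at_meet BM vB wB nvw AD A1D).
  by have := none x; rewrite xAA1.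
have vA1 : v \notin A1 by rewrite (D1_at_notin wX vX) // eq_sym.
rewrite -(card_in_imset (f := meet)); last first.
  move=> A A' AD A'D eq_meet; apply/eqP; apply/negPn/negP => nAA'.
  have [AF vA _] := D1_atP vX AD; have [A'F vA' _] := D1_atP vX A'D.
  have /setIP[mA mA1] := meetP A AD; have /setIP[mA' _] := meetP A' A'D.
  rewrite eq_meet in mA mA1.
  by move: vA1; rewrite (linear_common_vertex linF AF A'F nAA' vA vA' mA mA') mA1.
rewrite -(unifF A1F) (cardsD1 w A1) wA1; apply/subset_leq_card/subsetP => x.
case/imsetP => A AD ->; have /setIP[mA mA1] := meetP A AD.
by rewrite !inE mA1 andbT; apply: contraNneq (D1_at_notin vX wX nvw AD) => <-.
Qed.

Lemma card_D1_block B : B \in M ->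
  #|\bigcup_(v in B) D1_at v| <= maxn (Delta F).-1 (k * (k - 1)).
Proof.
move=> BM.
case: (pickP [pred v in B | D1_at v != set0]) => [v1 /andP[v1B /set0Pn[A1 A1D]] | none].
  case: (pickP [pred v in B | (v != v1) && (D1_at v != set0)]) =>
      [v2 /and3P[v2B n21 /set0Pn[A2 A2D]] | none].
    apply: leq_trans (leq_maxr _ _); apply: leq_trans (leq_card_bigcup _ _) _.
    rewrite -{1}(unifF (subsetP sMF _ BM)) -sum_nat_const subn1.
    apply: leq_sum => v vB; case: (eqVneq v v1) => [-> | nv1].
      by apply: (card_D1_at_le_pred BM v1B v2B _ A2D); rewrite eq_sym.
    exact: card_D1_at_le_pred BM vB v1B nv1 A1D.
  apply: leq_trans (leq_maxl _ _); apply: leq_trans (card_D1_at_le_Delta BM v1B).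
  apply/subset_leq_card/bigcupsP => v vB; case: (eqVneq v v1) => [-> // | nv1].
  by have := none v; rewrite /= vB nv1 => /negbFE/eqP->; apply: sub0set.
rewrite big1 ?cards0 // => v vB.
by apply/eqP; have := none v; rewrite /= vB => /negbFE.
Qed.

Lemma D1_sub_blocks : D1 F M \subset \bigcup_(B in M) \bigcup_(v in B) D1_at v.
Proof.
apply/subsetP => A AD; have := AD; rewrite inE => /andP[_ /cards1P[x AX]].
have /setIP[xA /bigcupP[B BM xB]] : x \in A :&: XM M by rewrite AX set11.
by apply/bigcupP; exists B => //; apply/bigcupP; exists x; rewrite // inE AD.
Qed.

End D1Bound.

Theorem lemma3 (T : finType) (k : nat) (F M : {set {set T}}) :
  2 <= k -> uniform k F -> linear F -> is_max_matching F M ->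
  #|D1 F M| <= maxn ((Delta F).-1 * nu F) (k * (k - 1) * nu F).
Proof.
move=> k_ge2 unifF linF maxM.
apply: leq_trans (subset_leq_card (D1_sub_blocks F M)) _.
apply: leq_trans (leq_card_bigcup _ _) _.
rewrite -maxnMl; case: (maxM) => _ <-; rewrite mulnC -sum_nat_const.
by apply: leq_sum => B BM; apply: card_D1_block.
Qed.
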